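(* Let $p\in(1/2,1)$, $\alpha=p/(1-p)$, and for $r=1,2,\ldots$ let $\epsilon_r=\dfrac{\alpha-\alpha^{1/r}}{\alpha^{1/r+1}-1}$. Then $(\epsilon_r)_{r\ge1}$ is an increasing sequence, and for every $r\ge1$ and every $\epsilon\in[\epsilon_r,\epsilon_{r+1})$, at least $r+1$ consecutive $Y$ observations are necessary for a $Y$ cascade to begin: on every path of the walk that leaves $[-1,1]$ above $1$ at some step $n$, the last $r+1$ steps (steps $n-r,\ldots,n$) are all up-steps ($Y$ observations).
   Context: Observational learning model: an item has true value $V\in\{G,B\}$; agents arrive sequentially, each receives a private binary signal equal to the ''correct'' signal with probability $p\in(1/2,1)$, and each agent is independently fake with probability $\epsilon\in[0,1)$ (a fake agent's recorded action is always $Y$ = buy). Define $a=p+(1-p)\epsilon$, $b=p(1-\epsilon)$ and $\eta=\eta(\epsilon)=\log\big(a/(1-b)\big)/\log\alpha\in(0,1]$. Before any cascade, the agents' sufficient statistic $h$ evolves as the following walk: $h_0=0$ and at each step $h$ increases by $\eta$ (an observed $Y$) or decreases by $1$ (an observed $N$); the walk is stopped the first time it leaves $[-1,1]$. Leaving above $1$ is the beginning of a $Y$ cascade, leaving below $-1$ of an $N$ cascade. *)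

From Stdlib Require Import Reals Lra Lia.
Open Scope R_scope.

Definition alpha (p : R) : R := p / (1 - p).

Definition eps_seq (p : R) (r : nat) : R :=
  (alpha p - Rpower (alpha p) (1 / INR r)) /
  (Rpower (alpha p) (1 / INR r + 1) - 1).

Definition a_par (p e : R) : R := p + (1 - p) * e.
Definition b_par (p e : R) : R := p * (1 - e).
Definition eta (p e : R) : R := ln (a_par p e / (1 - b_par p e)) / ln (alpha p).

(* The walk h driven by observations s : nat -> bool; s j (j >= 1) is the
   j-th observation (true = Y, up-step +eta; false = N, down-step -1).
   h_0 = 0 and h_n = h_{n-1} + step of observation n. *)
Fixpoint walk (et : R) (s : nat -> bool) (n : nat) : R :=
  match n with
  | O => 0
  | S k => walk et s k + (if s (S k) then et else -1)
  end.

From Stdlib Require Import Reals Lra Lia.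
Open Scope R_scope.

(* Write A = alpha p.  The likelihood ratio a/(1-b) of a Y observation is
   (A+e)/(1+Ae), so eta = log_A ((A+e)/(1+Ae)), and eps_r is precisely the e
   at which this ratio equals A^(1/r), i.e. at which eta = 1/r.  The inverse
   map x |-> (A-x)/(Ax-1) is decreasing, so eps_r increases as A^(1/r)
   decreases, and e >= eps_r forces r * eta <= 1: a run of at most r up-steps
   raises h by at most 1.  If one of the last r+1 steps before the exit were a
   down-step, h would be at most 1 - 1 = 0 right after it (or the run would
   start from h_0 = 0), and the remaining up-steps could not lift h above 1. *)

Section Walk.

Variables (et : R) (s : nat -> bool).

Lemma walk_up_run m d :
  (forall j, (m < j <= m + d)%nat -> s j = true) ->
  walk et s (m + d) = walk et s m + INR d * et.
Proof.
  induction d as [|d IH]; intros up.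
  - rewrite Nat.add_0_r; simpl; lra.
  - rewrite Nat.add_succ_r; simpl walk.
    rewrite IH by (intros; apply up; lia).
    rewrite up, S_INR by lia; lra.
Qed.

Variables (r n : nat).
Hypotheses (et_nonneg : 0 <= et) (run_bound : INR r * et <= 1)
  (below_before : forall k, (k < n)%nat -> walk et s k <= 1)
  (exits : 1 < walk et s n).

Lemma up_run_extends d :
  (d <= r)%nat -> (d <= n)%nat ->
  (forall j, (n - d < j <= n)%nat -> s j = true) ->
  (d < n)%nat /\ s (n - d)%nat = true.
Proof.
  intros d_le_r d_le_n up.
  assert (run : walk et s n = walk et s (n - d) + INR d * et).
  { replace n with (n - d + d)%nat at 1 by lia.
    apply walk_up_run; intros j hj; apply up; lia. }
  assert (short_run : INR d * et <= 1).
  { apply Rle_trans with (INR r * et); [|exact run_bound].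
    apply Rmult_le_compat_r; [exact et_nonneg|apply le_INR; exact d_le_r]. }
  destruct (n - d)%nat as [|k] eqn:start.
  - simpl in run; lra.
  - split; [lia|].
    destruct (s (S k)) eqn:step; [reflexivity|].
    assert (down : walk et s (S k) = walk et s k - 1)
      by (simpl; rewrite step; lra).
    specialize (below_before k ltac:(lia)); lra.
Qed.

Lemma exit_after_up_run :
  (r + 1 <= n)%nat /\ (forall j, (n - r <= j <= n)%nat -> s j = true).
Proof.
  assert (runs : forall d, (d <= r + 1)%nat ->
            (d <= n)%nat /\ forall j, (n - d < j <= n)%nat -> s j = true).
  { induction d as [|d IH]; intros hd.
    - split; [lia|intros j hj; lia].
    - destruct IH as [d_le_n up]; [lia|].
      destruct (up_run_extends d) as [d_lt_n step]; [lia|exact d_le_n|exact up|].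
      split; [lia|intros j hj].
      destruct (Nat.eq_dec j (n - d)) as [->|]; [exact step|apply up; lia]. }
  destruct (runs (r + 1)%nat) as [hn up]; [lia|].
  split; [exact hn|intros j hj; apply up; lia].
Qed.

End Walk.

(* [ratioY (alpha p) e] is the likelihood ratio a/(1-b) of a Y observation;
   [ratioY_inv A] is the inverse of [ratioY A] as a function of e. *)
Definition ratioY (A e : R) : R := (A + e) / (1 + A * e).
Definition ratioY_inv (A x : R) : R := (A - x) / (A * x - 1).

Lemma alpha_gt_1 p : 1/2 < p < 1 -> 1 < alpha p.
Proof.
  intros hp; unfold alpha.
  apply Rmult_lt_reg_r with (1 - p); [lra|].
  rewrite <- Rmult_div_swap, Rmult_div_l by lra; lra.
Qed.

Lemma Rpower_gt_1 x y : 1 < x -> 0 < y -> 1 < Rpower x y.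
Proof. intros; rewrite <- (Rpower_O x) by lra; apply Rpower_lt; lra. Qed.

Lemma eps_seq_ratioY_inv p r : 0 < alpha p ->
  eps_seq p r = ratioY_inv (alpha p) (Rpower (alpha p) (1 / INR r)).
Proof.
  intros hA; unfold eps_seq, ratioY_inv.
  rewrite Rpower_plus, Rpower_1 by exact hA; f_equal; ring.
Qed.

Lemma eta_ratioY p e : 0 < p < 1 -> 0 <= e ->
  eta p e = ln (ratioY (alpha p) e) / ln (alpha p).
Proof.
  intros hp he; unfold eta, ratioY, alpha, a_par, b_par.
  f_equal; f_equal; field; split; nra.
Qed.

Lemma ratioY_inv_decreasing A x1 x2 :
  1 < A -> 1 < A * x2 -> x2 < x1 -> ratioY_inv A x1 < ratioY_inv A x2.
Proof.
  intros hA hx2 hx; unfold ratioY_inv.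
  assert (gap : (A - x2) / (A * x2 - 1) - (A - x1) / (A * x1 - 1)
                = (A * A - 1) * (x1 - x2) / ((A * x1 - 1) * (A * x2 - 1)))
    by (field; nra).
  assert (0 < (A * A - 1) * (x1 - x2) / ((A * x1 - 1) * (A * x2 - 1)))
    by (apply Rdiv_lt_0_compat; apply Rmult_lt_0_compat; nra).
  lra.
Qed.

Lemma ratioY_le_of_ratioY_inv_le A x e :
  0 < 1 + A * e -> 0 < A * x - 1 -> ratioY_inv A x <= e -> ratioY A e <= x.
Proof.
  intros he hx hle; unfold ratioY, ratioY_inv in *.
  apply Rmult_le_reg_r with (1 + A * e); [exact he|].
  apply Rmult_le_compat_r with (r := A * x - 1) in hle; [|lra].
  rewrite <- Rmult_div_swap, Rmult_div_l in * by lra; lra.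
Qed.

Lemma one_le_ratioY A e : 1 <= A -> 0 <= e <= 1 -> 1 <= ratioY A e.
Proof.
  intros hA he; unfold ratioY.
  apply Rmult_le_reg_r with (1 + A * e); [nra|].
  rewrite Rmult_1_l, <- Rmult_div_swap, Rmult_div_l by nra; nra.
Qed.

Lemma log_ratio_bounds A q y :
  1 < A -> 1 <= q <= Rpower A y -> 0 <= ln q / ln A <= y.
Proof.
  intros hA [hq1 hqy].
  assert (lnA_pos : 0 < ln A) by (rewrite <- ln_1; apply ln_increasing; lra).
  assert (ln_mono : forall u v, 0 < u -> u <= v -> ln u <= ln v).
  { intros u v hu [huv|<-]; [left; apply ln_increasing; lra|lra]. }
  pose proof (ln_mono 1 q ltac:(lra) hq1) as lnq_ge0.
  pose proof (ln_mono q _ ltac:(lra) hqy) as lnq_le.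
  rewrite ln_1 in lnq_ge0; rewrite ln_Rpower in lnq_le.
  split.
  - apply Rmult_le_pos; [lra|left; apply Rinv_0_lt_compat; lra].
  - apply Rmult_le_reg_r with (ln A); [lra|].
    rewrite <- Rmult_div_swap, Rmult_div_l by lra; lra.
Qed.

Lemma eps_seq_increasing p r : 1/2 < p < 1 -> (1 <= r)%nat ->
  eps_seq p r < eps_seq p (S r).
Proof.
  intros hp hr.
  pose proof (alpha_gt_1 p hp) as hA.
  rewrite !eps_seq_ratioY_inv by lra.
  assert (hr0 : 0 < INR r) by (apply lt_0_INR; lia).
  assert (hr1 : INR r < INR (S r)) by (apply lt_INR; lia).
  apply ratioY_inv_decreasing; [exact hA| |].
  - pose proof (Rpower_gt_1 (alpha p) (1 / INR (S r)) hA
                  ltac:(apply Rdiv_lt_0_compat; lra)); nra.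
  - apply Rpower_lt; [exact hA|].
    rewrite !Rdiv_1_l; apply Rinv_lt_contravar; nra.
Qed.

Lemma eta_run_bounds p r e : 1/2 < p < 1 -> (1 <= r)%nat -> 0 <= e < 1 ->
  eps_seq p r <= e -> 0 <= eta p e /\ INR r * eta p e <= 1.
Proof.
  intros hp hr he heps.
  pose proof (alpha_gt_1 p hp) as hA.
  assert (hr0 : 0 < INR r) by (apply lt_0_INR; lia).
  rewrite eps_seq_ratioY_inv in heps by lra.
  assert (hx : 1 < Rpower (alpha p) (1 / INR r))
    by (apply Rpower_gt_1; [exact hA|apply Rdiv_lt_0_compat; lra]).
  destruct (log_ratio_bounds (alpha p) (ratioY (alpha p) e) (1 / INR r) hA)
    as [eta_ge0 eta_le].
  { split; [apply one_le_ratioY; lra|].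
    apply ratioY_le_of_ratioY_inv_le; [nra|nra|exact heps]. }
  rewrite eta_ratioY by lra.
  split; [exact eta_ge0|].
  apply Rmult_le_compat_l with (r := INR r) in eta_le; [|lra].
  rewrite Rdiv_1_l, Rinv_r in eta_le by lra; exact eta_le.
Qed.

Theorem lemma2 (p : R) (hp : 1/2 < p < 1) :
  (forall r : nat, (1 <= r)%nat -> eps_seq p r < eps_seq p (S r)) /\
  (forall (r : nat) (e : R), (1 <= r)%nat -> 0 <= e < 1 ->
     eps_seq p r <= e < eps_seq p (S r) ->
     forall (s : nat -> bool) (n : nat),
       (forall k : nat, (k < n)%nat -> -1 <= walk (eta p e) s k <= 1) ->
       1 < walk (eta p e) s n ->
       (r + 1 <= n)%nat /\
       (forall j : nat, (n - r <= j <= n)%nat -> s j = true)).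
Proof.
  split.
  - intros r hr; exact (eps_seq_increasing p r hp hr).
  - intros r e hr he [heps _] s n inside exits.
    destruct (eta_run_bounds p r e hp hr he heps) as [eta_ge0 run_bound].
    apply (exit_after_up_run (eta p e) s r n eta_ge0 run_bound); [|exact exits].
    intros k hk; exact (proj2 (inside k hk)).
Qed.
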